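(* Let $e$ be an edge (resp. half-edge) of a rationally metrised graph $\Gamma$, let $v_{e,s}$ be the rational vertex at distance $s\in[0,\ell(e)]\cap\mathbb Q$ (resp. $s\in[0,\infty)\cap\mathbb Q$) along $e$ from $s(e)$, and let $e_s$ be the rational edge from $s(e)$ to $v_{e,s}$ inside $e$. Then for every rational vertex $b$, \[\gamma^{\mathrm{can}}_{b,v_{e,s}}=e_s\,\gamma^{\mathrm{can}}_{b,s(e)}\,\alpha_b^{-1}\left(\exp(-se^* )\right),\] where $\alpha_b\colon\widehat{\mathbb Q}\pi_1(\Gamma,b)\xrightarrow{\sim}\prod_{m\ge0}\mathrm H^1(\Gamma)^{\otimes m}$ is the duality isomorphism at basepoint $b$.
   Context: Graph conventions: finite sets of vertices, oriented edges, half-edges, source map $s$, fixed-point-free involution $e\mapsto e^{-1}$ on edges, $t(e)=s(e^{-1})$, connected; lengths $\ell(e)=\ell(e^{-1})\in\mathbb Q_{>0}$. Rational vertices are points at rational distance along edges/half-edges; one may subdivide so they become vertices, which does not affect the constructions. Paths compose right to left. $\mathrm H_1(\Gamma)\subset\mathbb Q\cdot E^\pm$ (span of edges mod $e^{-1}=-e$) with pairing $\int_ee'=\pm\ell(e)$ if $e'=e^{\pm1}$, else $0$; $\mathrm H^1(\Gamma)$ is the dual. For an edge $e$, $e^*\in\mathrm H^1(\Gamma)$ gives the multiplicity of $e$ in a homology class; for a half-edge, $e^*=0$. Higher cycle pairing: $\int_1\omega_1\cdots\omega_n=[n=0]$, $\int_e\omega_1\cdots\omega_n=\frac1{n!}\prod_i\int_e\omega_i$,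 $\int_{e\gamma}\omega_1\cdots\omega_n=\sum_{i=0}^n\int_e\omega_{i+1}\cdots\omega_n\int_\gamma\omega_1\cdots\omega_i$. $\widehat{\mathbb Q}\pi_1(\Gamma;u,v)$ is the completion of $\mathbb Q\pi_1(\Gamma;u,v)$ with respect to powers of the augmentation ideal of $\mathbb Q\pi_1(\Gamma,u)$; $\alpha\colon\widehat{\mathbb Q}\pi_1(\Gamma;u,v)\xrightarrow\sim\prod_m\mathrm H^1(\Gamma)^{\otimes m}$ sends $\gamma$ to $\omega_1\cdots\omega_n\mapsto\int_\gamma\omega_1\cdots\omega_n$. The canonical path $\gamma^{\mathrm{can}}_{u,v}:=\alpha^{-1}(1)\in\widehat{\mathbb Q}\pi_1(\Gamma;u,v)$. *)

From HB Require Import structures.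
From mathcomp Require Import all_boot all_order all_algebra.
Set Implicit Arguments. Unset Strict Implicit. Unset Printing Implicit Defensive.
Import Order.TTheory GRing.Theory Num.Theory.
Local Open Scope ring_scope.

(* Walks: [p] is the sequence of edges in traversal order (first edge first),
   starting at [u] and ending at [v]; the target of [e] is [src (inv e)]. *)
Fixpoint gpath (V E : eqType) (src : E -> V) (inv : E -> E) (u v : V)
    (p : seq E) : bool :=
  match p with
  | [::] => u == v
  | g :: p' => (src g == u) && gpath src inv (src (inv g)) v p'
  end.

Record graph := Graph {
  gV : finType; gE : finType; gH : finType;
  gsrc : gE -> gV; ginv : gE -> gE; ghsrc : gH -> gV; glen : gE -> rat;
  ginvK : involutive ginv;
  ginv_neq : forall e, ginv e != e;
  glen_pos : forall e, 0 < glen e;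
  glen_inv : forall e, glen (ginv e) = glen e;
  gconn : forall u v : gV, exists p : seq gE, gpath gsrc ginv u v p }.

Section Defs.
Variable G : graph.
Local Notation V := (gV G).
Local Notation E := (gE G).
Local Notation H := (gH G).

Definition tgt (e : E) : V := gsrc (ginv e).
Definition is_path (u v : V) (p : seq E) : bool := gpath (@gsrc G) (@ginv G) u v p.
Definition path_end (u : V) (p : seq E) : V := last u (map tgt p).

(* Reduced form of a walk (cancel backtracking e^{-1} e); homotopy classes of
   paths = reduced walks, which form the basis of Q pi_1(G; u, v). *)
Definition red_step (st : seq E) (e : E) : seq E :=
  match st with
  | f :: st' => if f == ginv e then st' else e :: st
  | [::] => [:: e]
  end.
Definition reduce (p : seq E) : seq E := rev (foldl red_step [::] p).

(* Finite formal Q-linear combinations of walks (elements of the group ring,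
   via their reductions). *)
Definition fsum := seq (rat * seq E).
Definition coef (x : fsum) (q : seq E) : rat :=
  \sum_(t <- x | reduce t.2 == q) t.1.
Definition fs_eq (x y : fsum) : Prop := forall q, coef x q = coef y q.
Definition fs_sub (x y : fsum) : fsum := x ++ [seq (- t.1, t.2) | t <- y].
(* product x * y : composition right to left, y traversed first *)
Definition fs_mul (x y : fsum) : fsum :=
  [seq (t.1 * t'.1, t'.2 ++ t.2) | t <- x, t' <- y].
Definition fs_one : fsum := [:: (1, [::])].
Definition aug_prod (gs : seq (seq E)) : fsum :=
  foldr (fun g acc => fs_mul [:: (1, g); (-1, [::])] acc) fs_one gs.

(* x lies in Q pi_1(G;u,v) . I_u^n, I_u the augmentation ideal of Q pi_1(G,u). *)
Definition in_J (u v : V) (n : nat) (x : fsum) : Prop :=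
  exists ts : seq ((rat * seq E) * seq (seq E)),
    all (fun t => [&& is_path u v t.1.2, size t.2 == n & all (is_path u u) t.2]) ts
    /\ fs_eq x (flatten [seq fs_mul [:: t.1] (aug_prod t.2) | t <- ts]).

(* Elements of the completion hat{Q} pi_1(G;u,v) = lim_n Q pi_1(G;u,v)/(. I_u^n):
   compatible families of representatives x_n of classes mod Q pi_1 . I_u^n. *)
Definition in_completion (u v : V) (X : nat -> fsum) : Prop :=
  (forall n, all (fun t => is_path u v t.2) (X n)) /\
  (forall n, in_J u v n (fs_sub (X n.+1) (X n))).

(* H_1(G): antisymmetric edge chains with zero boundary.  An element of
   H^1(G) = H_1(G)^dual is represented by the cycle c with
   omega = < . , c > (metric pairing); then int_e omega = l(e) c(e). *)
Definition is_cycle (c : E -> rat) : bool :=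
  [forall e, c (ginv e) == - c e] && [forall w : V, \sum_(e | gsrc e == w) c e == 0].

Definition iint_edge (e : E) (ws : seq (E -> rat)) : rat :=
  ((size ws)`!%:R)^-1 * \prod_(w <- ws) (glen e * w e).

(* higher cycle pairing, on the reversed walk (last edge first):
   int_{e gamma} w_1..w_n = sum_i int_e w_{i+1}..w_n int_gamma w_1..w_i *)
Fixpoint iint_rev (r : seq E) (ws : seq (E -> rat)) : rat :=
  match r with
  | [::] => (size ws == 0%N)%:R
  | e :: r' => \sum_(i < (size ws).+1) iint_edge e (drop i ws) * iint_rev r' (take i ws)
  end.
Definition iint (p : seq E) (ws : seq (E -> rat)) : rat := iint_rev (rev p) ws.
Definition iint_fs (x : fsum) (ws : seq (E -> rat)) : rat :=
  \sum_(t <- x) t.1 * iint t.2 ws.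

(* Elements of prod_m H^1^{(x) m}, given through their pairings with
   omega_1 (x) ... (x) omega_m. *)
Definition series := seq (E -> rat) -> rat.
Definition ser_eq (f g : series) : Prop :=
  forall ws, all is_cycle ws -> f ws = g ws.
Definition ser_one : series := fun ws => (size ws == 0%N)%:R.
(* exp(t . eta) where [pe w] = <eta, omega_w> *)
Definition ser_exp (t : rat) (pe : (E -> rat) -> rat) : series :=
  fun ws => t ^+ size ws / (size ws)`!%:R * \prod_(w <- ws) pe w.

(* the duality map alpha: degree m component read off at level m+1 *)
Definition alpha (X : nat -> fsum) : series :=
  fun ws => iint_fs (X (size ws).+1) ws.

Definition canonical_path (u v : V) (Y : nat -> fsum) : Prop :=
  in_completion u v Y /\ ser_eq (alpha Y) ser_one.

(* Rational vertices made into vertices by subdivision.  An original edge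
   (kind = None) of the unsubdivided graph is the chain es = [e_1;...;e_k]
   (k >= 1) from u, all intermediate vertices being subdivision vertices
   (exactly the two edges inv e_i, e_(i+1) leaving it, no half-edge).
   An original half-edge (kind = Some h) is the chain es (k >= 0) followed by
   the half-edge h, the vertex where h starts being a subdivision vertex if
   k >= 1. *)
Definition subdivided_edge (u : V) (es : seq E) (kind : option H) : Prop :=
  [/\ is_path u (path_end u es) es,
      uniq (es ++ map (@ginv G) es),
      (forall (d : E) i, (i.+1 < size es)%N ->
         [set f | gsrc f == tgt (nth d es i)] = [set ginv (nth d es i); nth d es i.+1]
         /\ [set h : H | ghsrc h == tgt (nth d es i)] = set0)
    & match kind with
      | None => (0 < size es)%N
      | Some h => ghsrc h = path_end u es /\
          (forall d : E, (0 < size es)%N ->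
             [set f | gsrc f == path_end u es] = [set ginv (last d es)]
             /\ [set h' : H | ghsrc h' == path_end u es] = [set h])
      end].

(* <e^*, omega_w> = multiplicity of e in the cycle w  (= w(e_1));
   e^* = 0 for a half-edge. *)
Definition estar_pair (es : seq E) (kind : option H) (w : E -> rat) : rat :=
  match kind with
  | Some _ => 0
  | None => if es is e1 :: _ then w e1 else 0
  end.

End Defs.

From HB Require Import structures.
From mathcomp Require Import all_boot all_order all_algebra.
From mathcomp Require Import ring zify.
Import Order.TTheory GRing.Theory Num.Theory.
Set Implicit Arguments.
Unset Strict Implicit.
Unset Printing Implicit Defensive.
Local Open Scope ring_scope.

(* The product [e_s * Gc * X] lies in the completion: the increment of a product
   of completion elements is [(Z' - Z) Y' + Z (Y' - Y)], and right multiplication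
   by a path carries the augmentation ideal at its end to the one at its start
   by conjugation.  Its image under [alpha] is the product of
   the images: iterated integrals satisfy Chen's identity
   [int_(p q) = sum int_p (.) int_q (.)], are invariant under homotopy on cycles
   and vanish on [I^n] in degrees below [n], so every level of a completion element
   computes [alpha] in low degrees.  A cycle takes the same value on all edges of
   the subdivided edge (and the value 0 if it is a half-edge), so integrating the
   initial segment [e_s] gives [exp (s e^* )].  Hence
   [alpha (e_s Gc X) = exp (s e^* ) * 1 * exp (- s e^* ) = 1]. *)

Lemma all_take (T : Type) (P : pred T) s i : all P s -> all P (take i s).
Proof. by rewrite -{1}(cat_take_drop i s) all_cat => /andP[]. Qed.

Lemma all_drop (T : Type) (P : pred T) s i : all P s -> all P (drop i s).
Proof. by rewrite -{1}(cat_take_drop i s) all_cat => /andP[]. Qed.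

Lemma exprD_div_fact (R : numFieldType) (a b : R) n :
  (a + b) ^+ n / n`!%:R =
  \sum_(i < n.+1) a ^+ (n - i) / (n - i)`!%:R * (b ^+ i / i`!%:R).
Proof.
rewrite exprDn big_distrl /=; apply: eq_bigr => i _.
have le_in : (i <= n)%N by rewrite -ltnS.
have fact_neq0 m : (m`!%:R : R) != 0 by rewrite pnatr_eq0 -lt0n fact_gt0.
rewrite -(bin_fact le_in) !natrM -mulr_natr; field.
by rewrite !fact_neq0 pnatr_eq0 -lt0n bin_gt0.
Qed.

Section Walks.
Variable G : graph.
Local Notation V := (gV G).
Local Notation E := (gE G).

Lemma ginv_invK : involutive (@ginv G). Proof. exact: ginvK. Qed.

Definition walk_inv (p : seq E) : seq E := rev (map (@ginv G) p).

Definition walk_conj (d g : seq E) : seq E := d ++ g ++ walk_inv d.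

Lemma is_path_cat (u w v : V) p q :
  is_path u w p -> is_path w v q -> is_path u v (p ++ q).
Proof.
rewrite /is_path; elim: p u => [|g p IHp] u /=; first by move/eqP->.
by case/andP=> -> /IHp.
Qed.

Lemma is_path_prefix (u v : V) p q :
  is_path u v (p ++ q) -> is_path u (path_end u p) p.
Proof.
rewrite /is_path /path_end; elim: p u => [|g p IHp] u /=; first by rewrite eqxx.
by case/andP=> -> /IHp.
Qed.

Lemma is_path_inv (u v : V) p : is_path u v p -> is_path v u (walk_inv p).
Proof.
elim: p u => [|g p IHp] u /=; first by rewrite /is_path /= eq_sym.
case/andP=> /eqP gu /IHp p_path; rewrite /walk_inv /= rev_cons -cats1.
by apply: is_path_cat p_path _; rewrite /is_path /= ginv_invK gu !eqxx.
Qed.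

Lemma is_path_conj (u v : V) d g :
  is_path u v d -> is_path v v g -> is_path u u (walk_conj d g).
Proof.
by move=> d_path g_path; apply: is_path_cat d_path (is_path_cat g_path (is_path_inv d_path)).
Qed.

End Walks.

Section Reduction.
Variable G : graph.
Local Notation E := (gE G).

(* The stacks built by [foldl red_step] list a walk last edge first and never backtrack. *)
Fixpoint reduced_stack (st : seq E) : bool :=
  if st is f :: (g :: _) as st' then (f != ginv g) && reduced_stack st' else true.

Lemma reduced_red_step st e : reduced_stack st -> reduced_stack (red_step st e).
Proof.
case: st => [|f st] //= st_red; case: ifP => [_|fNe] /=.
  by case: st st_red => [|g st] //= /andP[].
rewrite st_red andbT; apply: contraFN fNe => /eqP ->.
by rewrite ginv_invK.
Qed.

Lemma reduced_foldl st p : reduced_stack st -> reduced_stack (foldl (@red_step G) st p).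
Proof. by elim: p st => [|e p IHp] st //= /(reduced_red_step e); apply: IHp. Qed.

Lemma red_step_cancel st e : reduced_stack st ->
  red_step (red_step st e) (ginv e) = st.
Proof.
case: st => [|f st] /=; first by rewrite ginv_invK eqxx.
case: ifPn => [/eqP fe|fNe] st_red /=; last by rewrite ginv_invK eqxx.
case: st st_red => [|g st] /=; first by rewrite fe.
case/andP=> fNg _; case: ifP => [/eqP|_]; last by rewrite fe.
by rewrite ginv_invK => ge; move: fNg; rewrite fe ge eqxx.
Qed.

Lemma reduce_cancel (a b : seq E) x : reduce (a ++ x :: ginv x :: b) = reduce (a ++ b).
Proof.
rewrite /reduce !foldl_cat /= red_step_cancel //.
exact: reduced_foldl.
Qed.

Section CancelInvariant.
Variables (T : Type) (F : seq E -> T).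
Hypothesis F_cancel : forall a b x, F (a ++ x :: ginv x :: b) = F (a ++ b).

Lemma cancel_invariant_foldl st q :
  F (rev (foldl (@red_step G) st q)) = F (rev st ++ q).
Proof.
elim: q st => [|e q IHq] st /=; first by rewrite cats0.
rewrite IHq; case: st => [|f st] //=; case: ifP => [/eqP->|_].
  by rewrite rev_cons cat_rcons -(F_cancel _ _ (ginv e)) ginv_invK.
by rewrite rev_cons cat_rcons.
Qed.

Lemma cancel_invariant_reduce p : F (reduce p) = F p.
Proof. exact: cancel_invariant_foldl. Qed.

Lemma cancel_invariant_inverse a l c :
  F (a ++ walk_inv l ++ l ++ c) = F (a ++ c).
Proof.
elim: l c => [|x l IHl] c //=.
rewrite /walk_inv /= rev_cons -cats1 -!catA /= -{2}[x]ginv_invK catA F_cancel -catA.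
exact: IHl.
Qed.

End CancelInvariant.

Lemma reduce_idem (p : seq E) : reduce (reduce p) = reduce p.
Proof. exact: (cancel_invariant_reduce (@reduce_cancel)). Qed.

Lemma reduce_catl (a b : seq E) : reduce (reduce a ++ b) = reduce (a ++ b).
Proof.
apply: (cancel_invariant_reduce (F := fun p : seq E => reduce (p ++ b))) => p q x.
by rewrite -!catA reduce_cancel.
Qed.

Lemma reduce_catr (a b : seq E) : reduce (a ++ reduce b) = reduce (a ++ b).
Proof.
apply: (cancel_invariant_reduce (F := fun p : seq E => reduce (a ++ p))) => p q x.
by rewrite !catA reduce_cancel.
Qed.

End Reduction.

Section Evaluation.
Variable G : graph.
Local Notation E := (gE G).
Implicit Types (x y z : fsum G) (f g : seq E -> rat).

Definition fs_ev f x : rat := \sum_(t <- x) t.1 * f t.2.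

Definition reduction_invariant f := forall p, f (reduce p) = f p.

Lemma reduction_invariant_catl f p :
  reduction_invariant f -> reduction_invariant (fun q => f (p ++ q)).
Proof. by move=> f_inv q; rewrite -f_inv reduce_catr f_inv. Qed.

Lemma reduction_invariant_catr f p :
  reduction_invariant f -> reduction_invariant (fun q => f (q ++ p)).
Proof. by move=> f_inv q; rewrite -f_inv reduce_catl f_inv. Qed.

Lemma reduction_invariant_inverse f a l c :
  reduction_invariant f -> f (a ++ walk_inv l ++ l ++ c) = f (a ++ c).
Proof.
move=> f_inv; apply: cancel_invariant_inverse => {}a b x.
by rewrite -f_inv reduce_cancel f_inv.
Qed.

Lemma eq_fs_ev f g x : f =1 g -> fs_ev f x = fs_ev g x.
Proof. by move=> fg; apply: eq_bigr => t _; rewrite fg. Qed.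

Lemma fs_ev_seq1 f c p : fs_ev f [:: (c, p)] = c * f p.
Proof. exact: big_seq1. Qed.

Lemma fs_ev_cat f x y : fs_ev f (x ++ y) = fs_ev f x + fs_ev f y.
Proof. exact: big_cat. Qed.

Lemma fs_ev_sub f x y : fs_ev f (fs_sub x y) = fs_ev f x - fs_ev f y.
Proof.
rewrite fs_ev_cat /fs_ev big_map -sumrN.
by congr (_ + _); apply: eq_bigr => t _; rewrite mulNr.
Qed.

Lemma fs_evB f g x : fs_ev (fun p => f p - g p) x = fs_ev f x - fs_ev g x.
Proof. by rewrite /fs_ev -sumrB; apply: eq_bigr => t _; rewrite mulrBr. Qed.

Lemma fs_ev_flatten (T : Type) f (F : T -> fsum G) s :
  fs_ev f (flatten [seq F t | t <- s]) = \sum_(t <- s) fs_ev f (F t).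
Proof. by rewrite /fs_ev big_flatten big_map. Qed.

Lemma fs_ev_mul f x y :
  fs_ev f (fs_mul x y) = fs_ev (fun p => fs_ev (fun q => f (q ++ p)) y) x.
Proof.
rewrite /fs_ev big_allpairs_dep; apply: eq_bigr => t _.
by rewrite [RHS]big_distrr; apply: eq_bigr => t' _ /=; rewrite mulrA.
Qed.

Lemma fs_ev_mul_seq1 f c p y :
  fs_ev f (fs_mul [:: (c, p)] y) = c * fs_ev (fun q => f (q ++ p)) y.
Proof. by rewrite fs_ev_mul fs_ev_seq1. Qed.

Lemma fs_ev_exchange (F : seq E -> seq E -> rat) y z :
  fs_ev (fun p => fs_ev (F p) z) y = \sum_(d <- z) d.1 * fs_ev (F^~ d.2) y.
Proof.
rewrite /fs_ev; under eq_bigr => t _ do rewrite big_distrr.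
rewrite exchange_big; apply: eq_bigr => d _ /=.
by rewrite big_distrr; apply: eq_bigr => t _ /=; rewrite mulrCA.
Qed.

Lemma fs_ev_coef f x (Q : seq (seq E)) :
  reduction_invariant f -> uniq Q -> {in x, forall t, reduce t.2 \in Q} ->
  fs_ev f x = \sum_(q <- Q) coef x q * f q.
Proof.
move=> f_inv Q_uniq xQ; rewrite /coef.
under eq_bigr => q _ do rewrite big_distrl /= big_mkcond /=.
rewrite exchange_big /fs_ev big_seq [RHS]big_seq; apply: eq_bigr => t /xQ tQ.
rewrite (bigD1_seq _ tQ Q_uniq) /= eqxx f_inv big1 ?addr0 // => q /negPf qNt.
by rewrite eq_sym qNt.
Qed.

Lemma fs_eqP x y :
  fs_eq x y <-> (forall f, reduction_invariant f -> fs_ev f x = fs_ev f y).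
Proof.
split=> [xy f f_inv | ev_xy q].
  pose Q := undup [seq reduce t.2 | t <- x ++ y].
  have inQ t z : t \in z -> {subset z <= x ++ y} -> reduce t.2 \in Q.
    by move=> tz /(_ t tz) txy; rewrite mem_undup (map_f (fun t => reduce t.2)).
  rewrite !(fs_ev_coef (Q := Q)) ?undup_uniq //; last 2 first.
  - by move=> t ty; apply: inQ ty _ => s; rewrite mem_cat orbC => ->.
  - by move=> t tx; apply: inQ tx _ => s; rewrite mem_cat => ->.
  by apply: eq_bigr => q _; rewrite xy.
have := ev_xy (fun p => (reduce p == q)%:R); rewrite /fs_ev /coef.
have indicator (z : fsum G) : \sum_(t <- z) t.1 * (reduce t.2 == q)%:R =
                   \sum_(t <- z | reduce t.2 == q) t.1.
  by rewrite [RHS]big_mkcond; apply: eq_bigr => t _; case: eqP; rewrite ?mulr1 ?mulr0.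
by rewrite !indicator; apply=> p; rewrite reduce_idem.
Qed.

Lemma fs_eq_ev_all x y : (forall f, fs_ev f x = fs_ev f y) -> fs_eq x y.
Proof. by move=> ev_xy; apply/fs_eqP => f _. Qed.

End Evaluation.

Section AugmentationIdeal.
Variable G : graph.
Local Notation V := (gV G).
Local Notation E := (gE G).
Implicit Types (u v w : V) (x y z : fsum G).

Lemma fs_ev_aug_cons (h : seq E -> rat) g gs :
  fs_ev h (aug_prod (g :: gs)) =
  fs_ev (fun q => h (q ++ g)) (aug_prod gs) - fs_ev h (aug_prod gs).
Proof.
rewrite fs_ev_mul {1}/fs_ev big_cons big_seq1 /= mul1r mulN1r.
by congr (_ - _); apply: eq_fs_ev => q; rewrite cats0.
Qed.

(* Right multiplication by a path [d] conjugates the augmentation ideal: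
   [(g - 1) d = d (d^-1 g d - 1)]. *)
Lemma fs_ev_aug_conj (F : seq E -> rat) d gs :
  reduction_invariant F ->
  fs_ev (fun r => F (d ++ r)) (aug_prod gs) =
  fs_ev (fun r => F (r ++ d)) (aug_prod (map (walk_conj d) gs)).
Proof.
elim: gs F => [|g gs IHgs] F F_inv; first by rewrite !fs_ev_seq1 cats0.
rewrite !fs_ev_aug_cons; congr (_ - _); last exact: IHgs.
transitivity (fs_ev (fun q => F ((q ++ d) ++ g)) (aug_prod (map (walk_conj d) gs))).
  rewrite -(IHgs (fun s => F (s ++ g))); last exact: reduction_invariant_catr.
  by apply: eq_fs_ev => q; rewrite catA.
apply: eq_fs_ev => q; rewrite /walk_conj !catA.
by have := reduction_invariant_inverse (q ++ d ++ g) d [::] F_inv; rewrite !cats0 !catA => ->.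
Qed.

Lemma in_J_eq u v n x y : fs_eq x y -> in_J u v n x -> in_J u v n y.
Proof. by move=> xy [ts [ts_ok x_ts]]; exists ts; split=> // q; rewrite -xy. Qed.

Lemma in_J_cat u v n x y : in_J u v n x -> in_J u v n y -> in_J u v n (x ++ y).
Proof.
move=> [ts [ts_ok x_ts]] [ts' [ts'_ok y_ts']]; exists (ts ++ ts').
rewrite all_cat ts_ok ts'_ok map_cat flatten_cat; split=> // q.
by rewrite /coef !big_cat /= -!/(coef _ _) x_ts y_ts'.
Qed.

Lemma in_J_mull u v w n z x :
  all (fun s => is_path v w s.2) z -> in_J u v n x -> in_J u w n (fs_mul z x).
Proof.
move=> z_paths [ts [ts_ok x_ts]].
exists [seq ((s.1 * t.1.1, t.1.2 ++ s.2), t.2) | s <- z, t <- ts]; split.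
  apply/allP => _ /allpairsP[[s t] [sz tts ->]] /=.
  have /and3P[t_path -> ->] := allP ts_ok t tts.
  by rewrite (is_path_cat t_path (allP z_paths s sz)).
apply/fs_eqP => f f_inv; rewrite fs_ev_mul fs_ev_flatten big_allpairs_dep.
apply: eq_bigr => s _; rewrite ((fs_eqP _ _).1 x_ts); last exact: reduction_invariant_catr.
rewrite fs_ev_flatten big_distrr; apply: eq_bigr => -[[c p] gs] _ /=.
by rewrite !fs_ev_mul_seq1 mulrA; congr (_ * _); apply: eq_fs_ev => q; rewrite catA.
Qed.

Lemma in_J_mulr u v w n x y :
  all (fun d => is_path u v d.2) y -> in_J v w n x -> in_J u w n (fs_mul x y).
Proof.
move=> y_paths [ts [ts_ok x_ts]].
exists [seq ((t.1.1 * d.1, d.2 ++ t.1.2), map (walk_conj d.2) t.2) | t <- ts, d <- y].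
split.
  apply/allP => _ /allpairsP[[t d] [tts dy ->]] /=.
  have d_path := allP y_paths d dy.
  have /and3P[t_path size_t loops_t] := allP ts_ok t tts.
  rewrite (is_path_cat d_path t_path) size_map size_t all_map /=.
  by apply: sub_all loops_t => g; apply: is_path_conj d_path.
apply/fs_eqP => f f_inv; rewrite fs_ev_mul ((fs_eqP _ _).1 x_ts); last first.
  by move=> p; apply: eq_fs_ev => q; apply: reduction_invariant_catl.
rewrite !fs_ev_flatten big_allpairs_dep; apply: eq_bigr => -[[c p] gs] _ /=.
rewrite fs_ev_mul_seq1 fs_ev_exchange big_distrr; apply: eq_bigr => d _ /=.
rewrite fs_ev_mul_seq1 mulrCA mulrA [d.1 * c]mulrC; congr (_ * _).
transitivity (fs_ev (fun r => f ((d.2 ++ r) ++ p)) (aug_prod gs)).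
  by apply: eq_fs_ev => r; rewrite catA.
rewrite (fs_ev_aug_conj (F := fun s => f (s ++ p))); last exact: reduction_invariant_catr.
by apply: eq_fs_ev => r; rewrite catA.
Qed.

End AugmentationIdeal.

Section Completion.
Variable G : graph.
Local Notation V := (gV G).
Implicit Types (u v w : V) (y z : fsum G) (Y Z : nat -> fsum G).

Lemma fs_sub_mul_split z z' y y' :
  fs_eq (fs_mul (fs_sub z' z) y' ++ fs_mul z (fs_sub y' y))
        (fs_sub (fs_mul z' y') (fs_mul z y)).
Proof.
apply: fs_eq_ev_all => f; rewrite fs_ev_cat !fs_ev_sub !fs_ev_mul fs_ev_sub.
rewrite (eq_fs_ev _ (fun p => fs_ev_sub (fun q => f (q ++ p)) y' y)) fs_evB.
by rewrite -addrA addKr.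
Qed.

Lemma in_completion_path u v p :
  is_path u v p -> in_completion u v (fun=> [:: (1, p)]).
Proof.
move=> p_path; split=> n /=; first by rewrite p_path.
exists [::]; split=> //; apply: fs_eq_ev_all => f.
by rewrite fs_ev_sub subrr /fs_ev big_nil.
Qed.

Lemma in_completion_mul u v w Z Y :
  in_completion v w Z -> in_completion u v Y ->
  in_completion u w (fun n => fs_mul (Z n) (Y n)).
Proof.
move=> [Z_paths Z_J] [Y_paths Y_J]; split=> n.
  apply/allP => _ /allpairsP[[t t'] [tZ t'Y ->]] /=.
  exact: is_path_cat (allP (Y_paths n) t' t'Y) (allP (Z_paths n) t tZ).
apply: in_J_eq (fs_sub_mul_split _ _ _ _) _.
exact: in_J_cat (in_J_mulr (Y_paths n.+1) (Z_J n)) (in_J_mull (Z_paths n) (Y_J n)).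
Qed.

End Completion.

Section Series.
Variable G : graph.
Implicit Types (f g h : series G) (ws : seq (gE G -> rat)).

(* The product of [prod_m H^1(G)^{(x) m}] dual to deconcatenation of words. *)
Definition ser_mul f g : series G :=
  fun ws => \sum_(i < (size ws).+1) f (drop i ws) * g (take i ws).

Lemma eq_ser_mul f f' g g' ws :
  (forall i, f (drop i ws) = f' (drop i ws)) ->
  (forall i, g (take i ws) = g' (take i ws)) ->
  ser_mul f g ws = ser_mul f' g' ws.
Proof. by move=> ff' gg'; apply: eq_bigr => i _; rewrite ff' gg'. Qed.

Lemma ser_eq_mul f f' g g' :
  ser_eq f f' -> ser_eq g g' -> ser_eq (ser_mul f g) (ser_mul f' g').
Proof.
move=> ff' gg' ws ws_cycles.
by apply: eq_ser_mul => i; [apply: ff'; apply: all_drop | apply: gg'; apply: all_take].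
Qed.

Lemma ser_mul1l g ws : ser_mul (@ser_one G) g ws = g ws.
Proof.
rewrite /ser_mul big_ord_recr /= drop_size take_size /ser_one eqxx mul1r.
rewrite big1 ?add0r // => i _.
by rewrite size_drop subn_eq0 leqNgt ltn_ord mul0r.
Qed.

Lemma ser_mul1r f ws : ser_mul f (@ser_one G) ws = f ws.
Proof.
rewrite /ser_mul big_ord_recl /= drop0 take0 /ser_one eqxx mulr1.
by rewrite big1 ?addr0 // => i _; rewrite size_takel ?mulr0.
Qed.

Lemma ser_mulA f g h ws :
  ser_mul f (ser_mul g h) ws = ser_mul (ser_mul f g) h ws.
Proof.
rewrite /ser_mul; set n := size ws.
pose F i k := f (drop i ws) * (g (drop k (take i ws)) * h (take k ws)).
transitivity (\sum_(i < n.+1) \sum_(k < n.+1 | (k < i.+1)%N) F i k).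
  apply: eq_bigr => i _; have le_in : (i <= n)%N by rewrite -ltnS.
  rewrite size_takel // big_distrr -(big_ord_widen _ (F i)) //.
  by apply: eq_bigr => k _; rewrite /F take_takel // -ltnS.
rewrite (exchange_big_dep xpredT) //=; apply: eq_bigr => k _.
have le_kn : (k <= n)%N by rewrite -ltnS.
rewrite big_distrl size_drop /= -[(n - k).+1]subSn //.
transitivity (\sum_(0 + k <= i < n.+1) F i k).
  by rewrite big_geq_mkord; apply: eq_bigl => i.
rewrite big_addn big_mkord; apply: eq_bigr => m _.
by rewrite drop_drop take_drop /F mulrA.
Qed.

Lemma ser_exp0 (c : (gE G -> rat) -> rat) ws : ser_exp 0 c ws = @ser_one G ws.
Proof.
rewrite /ser_exp /ser_one expr0n; case: ws => [|w ws] /=.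
  by rewrite big_nil fact0 invr1 !mulr1.
by rewrite !mul0r.
Qed.

Lemma ser_expD a b (c : (gE G -> rat) -> rat) ws :
  ser_mul (ser_exp a c) (ser_exp b c) ws = ser_exp (a + b) c ws.
Proof.
rewrite /ser_mul /ser_exp exprD_div_fact big_distrl /=.
apply: eq_bigr => i _; have le_i : (i <= size ws)%N by rewrite -ltnS.
have -> : \prod_(w <- ws) c w = \prod_(w <- take i ws) c w * \prod_(w <- drop i ws) c w.
  by rewrite -big_cat cat_take_drop.
by rewrite size_drop size_takel // mulrACA [X in _ * X]mulrC.
Qed.

End Series.

Section Cycles.
Variable G : graph.
Local Notation E := (gE G).

Lemma cycle_inv (w : E -> rat) e : is_cycle w -> w (ginv e) = - w e.
Proof. by case/andP => /forallP /(_ e) /eqP. Qed.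

Lemma cycle_out_sum (w : E -> rat) (x : gV G) :
  is_cycle w -> \sum_(f in [set f | gsrc f == x]) w f = 0.
Proof.
case/andP => _ /forallP /(_ x) /eqP out_sum; rewrite -[RHS]out_sum.
by apply: eq_bigl => f; rewrite inE.
Qed.

End Cycles.

Section IteratedIntegrals.
Variable G : graph.
Local Notation V := (gV G).
Local Notation E := (gE G).
Implicit Types (ws : seq (E -> rat)) (x y : fsum G).

Lemma iint_rev_cat (r1 r2 : seq E) ws :
  iint_rev (r1 ++ r2) ws = ser_mul (iint_rev r1) (iint_rev r2) ws.
Proof.
elim: r1 ws => [|e r1 IHr1] ws /=; first by rewrite -/(ser_one _) ser_mul1l.
rewrite -/(ser_mul _ _ ws).
rewrite (eq_ser_mul (f' := iint_edge e) (g' := ser_mul (iint_rev r1) (iint_rev r2))) //.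
by rewrite ser_mulA.
Qed.

Lemma iint_cat (p q : seq E) ws : iint (p ++ q) ws = ser_mul (iint q) (iint p) ws.
Proof. by rewrite /iint rev_cat iint_rev_cat. Qed.

Lemma iint_fs_mul x y ws :
  iint_fs (fs_mul x y) ws = ser_mul (iint_fs x) (iint_fs y) ws.
Proof.
rewrite /iint_fs /fs_mul big_allpairs_dep /ser_mul.
transitivity (\sum_(t <- x) \sum_(t' <- y) \sum_(i < (size ws).+1)
   (t.1 * iint t.2 (drop i ws)) * (t'.1 * iint t'.2 (take i ws))).
  apply: eq_bigr => t _; apply: eq_bigr => t' _ /=.
  by rewrite iint_cat /ser_mul big_distrr; apply: eq_bigr => i _ /=; rewrite mulrACA.
under eq_bigr => t _ do rewrite exchange_big.
rewrite exchange_big; apply: eq_bigr => i _.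
by rewrite big_distrl; apply: eq_bigr => t _ /=; rewrite big_distrr.
Qed.

Lemma iint_fs_sub x y ws :
  iint_fs (fs_sub x y) ws = iint_fs x ws - iint_fs y ws.
Proof. exact: (fs_ev_sub (fun p => iint p ws)). Qed.

Lemma iint_nil (p : seq E) : iint p [::] = 1.
Proof.
rewrite /iint; elim: (rev p) => [|e r IHr] //=.
by rewrite big_ord1 /= IHr /iint_edge /= big_nil invr1 !mulr1.
Qed.

Lemma iint_edge_const (e : E) ws s (c : (E -> rat) -> rat) :
  all (fun w => glen e * w e == s * c w) ws -> iint_edge e ws = ser_exp s c ws.
Proof.
move=> ws_const; rewrite /iint_edge /ser_exp.
have -> : \prod_(w <- ws) (glen e * w e) = s ^+ size ws * \prod_(w <- ws) c w.
  elim: ws ws_const => [|w ws IHws] /=; first by rewrite !big_nil expr0 mulr1.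
  by case/andP => /eqP wc /IHws; rewrite !big_cons wc exprS => ->; rewrite mulrACA.
by rewrite mulrA [_^-1 * _]mulrC.
Qed.

Lemma iint_const (p : seq E) ws (s : E -> rat) (c : (E -> rat) -> rat) :
  all (fun w => all (fun e => glen e * w e == s e * c w) p) ws ->
  iint p ws = ser_exp (\sum_(e <- p) s e) c ws.
Proof.
move=> p_const; rewrite /iint -big_rev.
have {p_const} : all (fun w => all (fun e => glen e * w e == s e * c w) (rev p)) ws.
  by apply: sub_all p_const => w /=; rewrite all_rev.
elim: (rev p) ws => [|e r IHr] ws p_const /=.
  by rewrite big_nil ser_exp0.
rewrite big_cons -ser_expD -/(ser_mul _ _ ws); apply: eq_ser_mul => i.
  by apply: iint_edge_const; apply: all_drop; apply: sub_all p_const => w /= /andP[].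
by apply: IHr; apply: all_take; apply: sub_all p_const => w /= /andP[].
Qed.

Lemma iint_backtrack (x : E) ws :
  all (@is_cycle G) ws -> iint [:: x; ginv x] ws = ser_one ws.
Proof.
move=> ws_cycles.
pose s (f : E) := if f == x then glen x else - glen x.
rewrite (iint_const (s := s) (c := fun w => w x)).
  by rewrite big_cons big_seq1 /s eqxx (negPf (ginv_neq x)) subrr ser_exp0.
apply: sub_all ws_cycles => w w_cycle /=.
by rewrite /s eqxx (negPf (ginv_neq x)) glen_inv (cycle_inv _ w_cycle) mulrN mulNr !eqxx.
Qed.

Lemma iint_reduction_invariant ws :
  all (@is_cycle G) ws -> reduction_invariant (fun p => iint p ws).
Proof.
move=> ws_cycles; apply: (cancel_invariant_reduce (F := fun p => iint p ws)) => a b x.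
rewrite -[x :: _]/([:: x; ginv x] ++ b) !iint_cat; apply: eq_ser_mul => // i.
rewrite iint_cat -[RHS]ser_mul1r; apply: eq_ser_mul => // k.
by rewrite iint_backtrack //; apply: all_take; apply: all_drop.
Qed.

Lemma iint_fs_aug gs ws :
  (size ws < size gs)%N -> iint_fs (aug_prod gs) ws = 0.
Proof.
elim: gs ws => [|g gs IHgs] //= ws lt_ws_gs.
have factor_nil : iint_fs [:: (1, g); (-1, [::])] [::] = 0.
  by rewrite /iint_fs big_cons big_seq1 /= !iint_nil mulN1r mul1r subrr.
rewrite iint_fs_mul /ser_mul big1 // => i _.
have [lt_take|ge_take] := ltnP (size (take i ws)) (size gs).
  by rewrite IHgs // mulr0.
have : (size ws <= i)%N by move: ge_take lt_ws_gs; rewrite size_take_min; lia.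
by move/drop_oversize->; rewrite factor_nil mul0r.
Qed.

Lemma iint_fs_in_J (u v : V) n x ws :
  in_J u v n x -> all (@is_cycle G) ws -> (size ws < n)%N -> iint_fs x ws = 0.
Proof.
move=> [ts [ts_ok x_ts]] ws_cycles lt_ws_n.
change (fs_ev (fun p => iint p ws) x = 0).
rewrite ((fs_eqP _ _).1 x_ts _ (iint_reduction_invariant ws_cycles)) fs_ev_flatten.
rewrite big1_seq // => -[[c p] gs] /andP[_ t_ts].
have /and3P[_ /eqP size_gs _] := allP ts_ok _ t_ts.
change (iint_fs (fs_mul [:: (c, p)] (aug_prod gs)) ws = 0).
rewrite iint_fs_mul /ser_mul big1 // => i _.
by rewrite iint_fs_aug ?mulr0 // size_gs size_take_min; lia.
Qed.

Lemma alpha_level (u v : V) X ws m :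
  in_completion u v X -> all (@is_cycle G) ws -> (size ws < m)%N ->
  iint_fs (X m) ws = alpha X ws.
Proof.
move=> [_ X_J] ws_cycles; elim: m => [|m IHm] //.
rewrite ltnS leq_eqVlt => /orP[/eqP <- // | lt_ws_m]; rewrite -IHm //.
have := iint_fs_in_J (X_J m) ws_cycles lt_ws_m.
by rewrite iint_fs_sub => /eqP; rewrite subr_eq0 => /eqP.
Qed.

Lemma alpha_mul (u v w : V) (Z Y : nat -> fsum G) :
  in_completion v w Z -> in_completion u v Y ->
  ser_eq (alpha (fun n => fs_mul (Z n) (Y n))) (ser_mul (alpha Z) (alpha Y)).
Proof.
move=> Z_compl Y_compl ws ws_cycles.
rewrite [LHS]/alpha iint_fs_mul; apply: eq_ser_mul => i.
  apply: alpha_level Z_compl (all_drop _ ws_cycles) _.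
  by rewrite size_drop ltnS leq_subr.
apply: alpha_level Y_compl (all_take _ ws_cycles) _.
by rewrite size_take_min ltnS geq_minr.
Qed.

Lemma alpha_path (p : seq E) ws : alpha (fun=> [:: (1, p)]) ws = iint p ws.
Proof. by rewrite /alpha /iint_fs big_seq1 mul1r. Qed.

End IteratedIntegrals.

Section SubdividedEdge.
Variables (G : graph) (u : gV G) (es : seq (gE G)) (kind : option (gH G)).
Hypothesis es_sub : subdivided_edge u es kind.
Local Notation E := (gE G).

Lemma subdivided_cycle_step (w : E -> rat) d i :
  is_cycle w -> (i.+1 < size es)%N -> w (nth d es i.+1) = w (nth d es i).
Proof.
case: es_sub => _ es_uniq inner _ w_cycle lt_i.
have [out_i _] := inner d i lt_i.
have := cycle_out_sum (tgt (nth d es i)) w_cycle; rewrite out_i.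
have inv_notin : ginv (nth d es i) \notin [set nth d es i.+1].
  rewrite inE; apply/eqP => inv_eq; have lt_i' := ltn_trans (ltnSn i) lt_i.
  move: es_uniq; rewrite cat_uniq => /and3P[_ /hasPn].
  by move=> /(_ _ (map_f (@ginv G) (mem_nth d lt_i'))); rewrite /= inv_eq mem_nth.
rewrite big_setU1 //= big_set1 (cycle_inv _ w_cycle) => /eqP.
by rewrite addrC subr_eq0 => /eqP.
Qed.

Lemma subdivided_cycle_nth (w : E -> rat) d i :
  is_cycle w -> (i < size es)%N -> w (nth d es i) = w (nth d es 0).
Proof.
move=> w_cycle; elim: i => [|i IHi] lt_i //.
by rewrite subdivided_cycle_step // IHi // ltnW.
Qed.

(* On a half-edge the cycle condition at the endpoint of the chain forces [w = 0]. *)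
Lemma subdivided_cycle_const (w : E -> rat) :
  is_cycle w -> all (fun e => w e == estar_pair es kind w) es.
Proof.
move=> w_cycle; case: es es_sub subdivided_cycle_nth => [|e1 es'] // sub_e1 w_nth.
have first_eq : w e1 = estar_pair (e1 :: es') kind w.
  case: kind sub_e1 => [h|] sub_e1 //=.
  case: sub_e1 => _ _ _ [_ /(_ e1 isT) [end_out _]].
  have := cycle_out_sum (path_end u (e1 :: es')) w_cycle.
  rewrite end_out big_set1 (cycle_inv _ w_cycle) -(nth_last e1) w_nth //.
  by move/eqP; rewrite oppr_eq0 => /eqP.
apply/allP => e e_in; rewrite -first_eq -(nth_index e1 e_in).
by rewrite (w_nth _ e1) ?index_mem.
Qed.

Lemma iint_subdivided_prefix j :
  ser_eq (iint (take j es))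
         (ser_exp (\sum_(e <- take j es) glen e) (estar_pair es kind)).
Proof.
move=> ws ws_cycles; apply: iint_const; apply: sub_all ws_cycles => w w_cycle /=.
have := all_take j (subdivided_cycle_const w_cycle).
by apply: sub_all => e /= /eqP ->.
Qed.

End SubdividedEdge.

Theorem corollary4p12 (G : graph) (u : gV G) (es : seq (gE G))
    (kind : option (gH G)) (j : nat) (b : gV G) (Gc X : nat -> fsum G) :
  subdivided_edge u es kind ->
  (j <= size es)%N ->
  canonical_path b u Gc ->
  in_completion b b X ->
  ser_eq (alpha X) (ser_exp (- \sum_(e <- take j es) glen e) (estar_pair es kind)) ->
  canonical_path b (path_end u (take j es))
    (fun n => fs_mul (fs_mul [:: (1, take j es)] (Gc n)) (X n)).
Proof.
move=> es_sub _ [Gc_compl alpha_Gc] X_compl alpha_X.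
set e_j := take j es; set s := \sum_(e <- e_j) glen e.
have e_path : is_path u (path_end u e_j) e_j.
  case: (es_sub) => + _ _ _; rewrite -(cat_take_drop j es); exact: is_path_prefix.
have e_compl := in_completion_path e_path.
have eGc_compl := in_completion_mul e_compl Gc_compl.
split; first exact: in_completion_mul eGc_compl X_compl.
have alpha_eGc : ser_eq (alpha (fun n => fs_mul [:: (1, e_j)] (Gc n)))
                        (ser_exp s (estar_pair es kind)).
  move=> ws ws_cycles; rewrite (alpha_mul e_compl Gc_compl ws_cycles) -[RHS]ser_mul1r.
  apply: (ser_eq_mul _ alpha_Gc) ws_cycles => ws' ws'_cycles.
  by rewrite alpha_path; apply: iint_subdivided_prefix es_sub j ws' ws'_cycles.
move=> ws ws_cycles; rewrite (alpha_mul eGc_compl X_compl ws_cycles).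
rewrite -(ser_exp0 (estar_pair es kind)) -(subrr s) -ser_expD.
exact: ser_eq_mul alpha_eGc alpha_X ws ws_cycles.
Qed.
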